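(* Let $\mathfrak{g}$ be a Leibniz algebra. Then $Z^{*}_{\mathrm{Lie}}(\mathfrak{g})=0$ if and only if for every non-zero $x\in Z_{\mathrm{Lie}}(\mathfrak{g})$ the natural map $\sigma_x:\mathcal{M}^{\mathrm{Lie}}(\mathfrak{g})\to\mathcal{M}^{\mathrm{Lie}}(\mathfrak{g}/\langle x\rangle)$ has non-trivial kernel, where $\langle x\rangle$ is the two-sided ideal generated by $x$.
   Context: Fix a field $\mathbb{K}$ with $\frac12\in\mathbb{K}$. A Leibniz algebra is a $\mathbb{K}$-vector space with a bilinear bracket satisfying $[x,[y,z]]=[[x,y],z]-[[x,z],y]$. $[\mathfrak{m},\mathfrak{n}]_{\mathrm{Lie}}$ is the span of all $[m,n]+[n,m]$. $Z_{\mathrm{Lie}}(\mathfrak{g})=\{z:[q,z]+[z,q]=0\ \forall q\in\mathfrak{g}\}$. A surjective homomorphism $f:\mathfrak{h}\to\mathfrak{g}$ is a $\mathrm{Lie}$-central extension if $\ker f\subseteq Z_{\mathrm{Lie}}(\mathfrak{h})$. The precise $\mathrm{Lie}$-center $Z^{*}_{\mathrm{Lie}}(\mathfrak{g})$ is the intersection of all $f(Z_{\mathrm{Lie}}(\mathfrak{h}))$ over all $\mathrm{Lie}$-central extensions $f:\mathfrak{h}\twoheadrightarrow\mathfrak{g}$. For a free presentation $0\to\mathfrak{r}\to\mathfrak{f}\to\mathfrak{g}\to0$ ($\mathfrak{f}$ free Leibniz), $\mathcal{M}^{\mathrm{Lie}}(\mathfrak{g})=\frac{\mathfrak{r}\cap[\mathfrak{f},\mathfrak{f}]_{\mathrm{Lie}}}{[\mathfrak{f},\mathfrak{r}]_{\mathrm{Lie}}}$;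 it is functorial, and the natural map $\sigma_x$ is the one induced by the quotient $\mathfrak{g}\to\mathfrak{g}/\langle x\rangle$ (with $\mathfrak{s}\subseteq\mathfrak{f}$ the preimage of $\langle x\rangle$, it sends $y+[\mathfrak{f},\mathfrak{r}]_{\mathrm{Lie}}$ to $y+[\mathfrak{f},\mathfrak{s}]_{\mathrm{Lie}}$). *)

From HB Require Import structures.
From mathcomp Require Import all_boot all_order all_algebra.
Set Implicit Arguments.
Unset Strict Implicit.
Unset Printing Implicit Defensive.
Import GRing.Theory.
Local Open Scope ring_scope.

Record leibniz (K : fieldType) := Leibniz {
  Lcar :> lmodType K;
  bra : Lcar -> Lcar -> Lcar;
  bra_linl : forall (a : K) (x y z : Lcar), bra (a *: x + y) z = a *: bra x z + bra y z;
  bra_linr : forall (a : K) (x y z : Lcar), bra z (a *: x + y) = a *: bra z x + bra z y;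
  bra_leibniz : forall x y z : Lcar, bra x (bra y z) = bra (bra x y) z - bra (bra x z) y
}.
Arguments bra {K} l _ _.

Section Defs.
Variable K : fieldType.

Definition span (V : lmodType K) (S : V -> Prop) : V -> Prop :=
  fun v => exists (n : nat) (a : 'I_n -> K) (w : 'I_n -> V),
      (forall i, S (w i)) /\ v = \sum_(i < n) a i *: w i.

Definition lie_br (g : leibniz K) (M N : g -> Prop) : g -> Prop :=
  span (fun v => exists m n, M m /\ N n /\ v = bra g m n + bra g n m).

Definition ZLie (g : leibniz K) : g -> Prop :=
  fun z => forall q, bra g q z + bra g z q = 0.

Definition is_hom (h g : leibniz K) (f : h -> g) : Prop :=
  (forall (a : K) (x y : h), f (a *: x + y) = a *: f x + f y) /\
  (forall x y : h, f (bra h x y) = bra g (f x) (f y)).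

Definition surj (A B : Type) (f : A -> B) : Prop := forall b, exists a, f a = b.

Definition lie_central_ext (h g : leibniz K) (f : h -> g) : Prop :=
  is_hom f /\ surj f /\ (forall y, f y = 0 -> ZLie y).

Definition precise_ZLie (g : leibniz K) : g -> Prop :=
  fun z => forall (h : leibniz K) (f : h -> g), lie_central_ext f ->
    exists w, ZLie w /\ f w = z.

Definition is_ideal (g : leibniz K) (I : g -> Prop) : Prop :=
  I 0 /\ (forall (a : K) x y, I x -> I y -> I (a *: x + y)) /\
  (forall q y, I y -> I (bra g q y) /\ I (bra g y q)).

Definition gen_ideal (g : leibniz K) (x : g) : g -> Prop :=
  fun y => forall I, is_ideal I -> I x -> I y.

Definition is_free (X : Type) (F : leibniz K) (iota : X -> F) : Prop :=
  forall (h : leibniz K) (phi : X -> h),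
    exists psi : F -> h, is_hom psi /\ (forall u, psi (iota u) = phi u) /\
      (forall psi' : F -> h, is_hom psi' -> (forall u, psi' (iota u) = phi u) ->
         forall y, psi' y = psi y).

(* Given a free presentation 0 -> r -> F -pi-> g -> 0, with r = ker pi and
   s = pi^{-1}(<x>) (so F ->> g/<x> is a free presentation with kernel s),
   M^Lie(g) = (r ∩ [F,F]_Lie)/[F,r]_Lie, M^Lie(g/<x>) = (s ∩ [F,F]_Lie)/[F,s]_Lie
   and sigma_x (y + [F,r]_Lie) = y + [F,s]_Lie.  The kernel of sigma_x is
   non-trivial iff some class y + [F,r]_Lie is non-zero but maps to zero: *)
Definition sigma_ker_nontrivial (F g : leibniz K) (pi : F -> g) (x : g) : Prop :=
  let r := fun y => pi y = 0 in
  let s := fun y => gen_ideal x (pi y) in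
  exists y : F, r y /\ lie_br (fun _ => True) (fun _ => True) y /\
    ~ lie_br (fun _ => True) r y /\ lie_br (fun _ => True) s y.

End Defs.

(* Fix the free presentation pi : F ->> g with kernel r. If [F,u]_Lie lies in
   [F,r]_Lie, then pi u is in Z*_Lie(g): given a Lie-central extension
   f : h ->> g, lift pi to psi : F -> h by freeness; psi kills [F,r]_Lie, and
   since h = psi(F) + ker f with ker f Lie-central, psi u is Lie-central.
   Conversely, F/[F,r]_Lie ->> g is a Lie-central extension, so z in Z*_Lie(g)
   has a preimage u whose class is Lie-central there. The t whose class is
   Lie-central form an ideal containing r and u, whose image contains <z>, so
   [F,s]_Lie lies in [F,r]_Lie for s = pi^-1(<z>). For x in Z_Lie(g) and
   pi u = x the elements [a,u] + [u,a] lie in r and in [F,s]_Lie, so together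
   these say that x lies in Z*_Lie(g) exactly when sigma_x is injective. *)

From HB Require Import structures.
From mathcomp Require Import all_boot all_order all_algebra.
From mathcomp Require Import boolp.
Set Implicit Arguments.
Unset Strict Implicit.
Unset Printing Implicit Defensive.
Import GRing.Theory Quotient.
Local Open Scope ring_scope.
Local Open Scope quotient_scope.

Notation symbra L x y := (bra L x y + bra L y x).

Section Subspace.
Variables (K : fieldType) (V : lmodType K).

Definition subspace (P : V -> Prop) : Prop :=
  P 0 /\ forall (a : K) x y, P x -> P y -> P (a *: x + y).

Lemma subspaceD (P : V -> Prop) x y : subspace P -> P x -> P y -> P (x + y).
Proof. by case=> _ Pcl Px Py; rewrite -[x]scale1r; apply: Pcl. Qed.

Lemma subspaceZ (P : V -> Prop) a x : subspace P -> P x -> P (a *: x).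
Proof. by case=> P0 Pcl Px; rewrite -[_ *: _]addr0; apply: Pcl. Qed.

Lemma span_mem (S : V -> Prop) v : S v -> span S v.
Proof.
by move=> Sv; exists 1%N, (fun=> 1), (fun=> v); split=> //; rewrite big_ord1 scale1r.
Qed.

Lemma span_subspace (S : V -> Prop) : subspace (span S).
Proof.
split; first by exists 0%N, (fun=> 0), (fun=> 0); split=> [[]//|]; rewrite big_ord0.
move=> a _ _ [n [a1 [w1 [Sw1 ->]]]] [m [a2 [w2 [Sw2 ->]]]].
exists (n + m)%N,
  (fun i => match split i with inl j => a * a1 j | inr j => a2 j end),
  (fun i => match split i with inl j => w1 j | inr j => w2 j end).
split=> [i|]; first by case: (split i).
rewrite big_split_ord scaler_sumr; congr (_ + _); apply: eq_bigr => i _.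
  by rewrite (unsplitK (inl _ i)) scalerA.
by rewrite (unsplitK (inr _ i)).
Qed.

Lemma span_min (S P : V -> Prop) :
  subspace P -> (forall v, S v -> P v) -> forall v, span S v -> P v.
Proof.
move=> [P0 Pcl] SP _ [n [a [w [Sw ->]]]].
elim: n a w Sw => [|n IHn] a w Sw; first by rewrite big_ord0.
rewrite big_ord_recr /= addrC; apply: Pcl; [exact: SP | exact: IHn].
Qed.

End Subspace.

Lemma ideal_subspace (K : fieldType) (L : leibniz K) (I : L -> Prop) :
  is_ideal I -> subspace I.
Proof. by case=> I0 [Icl _]. Qed.

Lemma bra_is_bilinear (K : fieldType) (L : leibniz K) :
  bilinear_for *:%R *:%R (bra L).
Proof. by split=> [u a x y | u a x y]; rewrite ?bra_linl ?bra_linr. Qed.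

HB.instance Definition _ (K : fieldType) (L : leibniz K) :=
  bilinear_isBilinear.Build K L L L *:%R *:%R (bra L) (bra_is_bilinear L).

Section LeibnizIdentities.
Variables (K : fieldType) (L : leibniz K).
Implicit Types x y z : L.

Lemma bra_leibnizl x y z :
  bra L (bra L x y) z = bra L x (bra L y z) + bra L (bra L x z) y.
Proof. by rewrite bra_leibniz subrK. Qed.

Lemma bra_symbra x y z : bra L x (symbra L y z) = 0.
Proof. by rewrite linearDr /= !bra_leibniz addrC addrA subrK subrr. Qed.

Lemma symbra_bral x y z :
  bra L (symbra L x y) z = symbra L x (bra L y z) + symbra L (bra L x z) y.
Proof.
rewrite linearDl /= (bra_leibnizl x) (bra_leibnizl y).
by rewrite [bra L y _ + _]addrC addrACA.
Qed.

Lemma symbra_brar x y z :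
  symbra L x (bra L y z) = bra L (symbra L x y) z - symbra L (bra L x z) y.
Proof. by rewrite symbra_bral addrK. Qed.

End LeibnizIdentities.

Lemma ZLie_ideal (K : fieldType) (L : leibniz K) : is_ideal (@ZLie K L).
Proof.
split; first by move=> q; rewrite linear0l linear0r addr0.
split=> [a x y Zx Zy q | q z Zz].
  by rewrite linearPl linearPr /= addrACA -scalerDr Zx Zy scaler0 addr0.
have Zbra b : ZLie (bra L z b).
  by move=> p; rewrite symbra_brar Zz (Zz (bra L p b)) linear0l subr0.
have -> : bra L q z = - bra L z q by apply/eqP; rewrite -addr_eq0 Zz.
by split=> // p; rewrite linearNl linearNr /= -opprD Zbra oppr0.
Qed.

Section Homomorphisms.
Variables (K : fieldType) (h g : leibniz K) (f : h -> g).
Hypothesis homf : is_hom f.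

Lemma homD x y : f (x + y) = f x + f y.
Proof. by have := (proj1 homf) 1 x y; rewrite !scale1r. Qed.

Lemma hom0 : f 0 = 0.
Proof. by apply: (addrI (f 0)); rewrite -homD !addr0. Qed.

Lemma homB x y : f (x - y) = f x - f y.
Proof. by rewrite addrC -scaleN1r (proj1 homf) scaleN1r addrC. Qed.

Lemma hom_symbra x y : f (symbra h x y) = symbra g (f x) (f y).
Proof. by rewrite homD !(proj2 homf). Qed.

Lemma preim_ideal (J : g -> Prop) : is_ideal J -> is_ideal (fun y => J (f y)).
Proof.
case=> J0 [Jcl Jbra]; split; first by rewrite hom0.
split=> [a x y Jx Jy | q y Jy]; first by rewrite (proj1 homf); apply: Jcl.
by rewrite !(proj2 homf); apply: Jbra.
Qed.

Lemma ker_ideal : is_ideal (fun y => f y = 0).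
Proof.
apply: (preim_ideal (J := fun z => z = 0)).
split=> //; split=> [a _ _ -> -> | q _ ->]; first by rewrite scaler0 addr0.
by rewrite linear0l linear0r.
Qed.

Lemma image_ideal (J : h -> Prop) :
  surj f -> is_ideal J -> is_ideal (fun z => exists2 y, J y & f y = z).
Proof.
move=> surjf [J0 [Jcl Jbra]]; split; first by exists 0; rewrite ?hom0.
split=> [a _ _ [x Jx <-] [y Jy <-] | q _ [y Jy <-]].
  by exists (a *: x + y); [apply: Jcl | rewrite (proj1 homf)].
have [p <-] := surjf q; have [Jpy Jyp] := Jbra p y Jy.
by split; [exists (bra h p y) | exists (bra h y p)]; rewrite ?(proj2 homf).
Qed.

End Homomorphisms.

Section LieBracketOfIdeal.
Variables (K : fieldType) (L : leibniz K) (I : L -> Prop).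
Hypothesis idealI : is_ideal I.
Local Notation LI := (lie_br (fun=> True) I).

Lemma lie_br_mem m n : I n -> LI (symbra L m n).
Proof. by move=> In; apply: span_mem; exists m, n. Qed.

Lemma lie_br_ideal : is_ideal LI.
Proof.
have [LI0 LIcl] : subspace LI := span_subspace _.
split=> //; split=> // q; apply: span_min => [|_ [m [n [_ [In ->]]]]].
  split; first by rewrite linear0l linear0r.
  move=> a x y [LIqx LIxq] [LIqy LIyq].
  by rewrite linearPl linearPr; split; apply: LIcl.
split; first by rewrite bra_symbra.
rewrite symbra_bral; apply: subspaceD (span_subspace _) _ _; apply: lie_br_mem => //.
by have [_ [_ Ibra]] := idealI; case: (Ibra q n In).
Qed.

Lemma lie_br_sub v : LI v -> I v.
Proof.
apply: span_min => [|_ [m [n [_ [In ->]]]]]; first exact: ideal_subspace.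
have [_ [_ Ibra]] := idealI; have [Imn Inm] := Ibra m n In.
exact: subspaceD (ideal_subspace idealI) Imn Inm.
Qed.

End LieBracketOfIdeal.

Section LeibnizQuotient.
Variables (K : fieldType) (L : leibniz K) (I : L -> Prop).
Hypothesis idealI : is_ideal I.

(* A boolean copy of [I], obtained classically, so that the quotient [{quot _}]
   of ring_quotient applies; it takes the proof of [is_ideal I] as an argument
   so that the closedness instance below can be keyed on it. *)
Definition ideal_pred of is_ideal I : {pred L} := fun v => `[< I v >].

Lemma ideal_predP v : reflect (I v) (v \in ideal_pred idealI).
Proof. exact: asboolP. Qed.

Lemma ideal_pred_submod_closed : submod_closed (ideal_pred idealI).
Proof.
have [I0 [Icl _]] := idealI; split; first exact/ideal_predP.
by move=> a x y /ideal_predP Ix /ideal_predP Iy; apply/ideal_predP/Icl.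
Qed.

HB.instance Definition _ :=
  GRing.isSubmodClosed.Build K L (ideal_pred idealI) ideal_pred_submod_closed.

Local Notation Q := {quot (ideal_pred idealI)}.

Lemma pi_eqP x y : \pi_Q x = \pi_Q y <-> I (x - y).
Proof.
split=> [/eqquotP|Ixy]; first by rewrite equivE => /ideal_predP.
by apply/eqquotP; rewrite equivE; apply/ideal_predP.
Qed.

Lemma pi_eq0 v : \pi_Q v = 0 <-> I v.
Proof. by rewrite -(raddf0 \pi_Q) pi_eqP subr0. Qed.

Lemma ideal_sub_repr v : I (v - repr (\pi_Q v)).
Proof. by apply/pi_eqP; rewrite reprK. Qed.

Definition quot_scale (a : K) := lift_op1 Q ( *:%R a).
Definition quot_bra := lift_op2 Q (bra L).

Lemma pi_scale a : {morph \pi_Q : v / a *: v >-> quot_scale a v}.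
Proof.
move=> v; unlock quot_scale; apply/pi_eqP; rewrite -scalerBr.
exact: subspaceZ (ideal_subspace idealI) (ideal_sub_repr v).
Qed.

Lemma pi_bra : {morph \pi_Q : x y / bra L x y >-> quot_bra x y}.
Proof.
move=> x y; unlock quot_bra; apply/pi_eqP.
set x' := repr _; set y' := repr _.
have -> : bra L x y - bra L x' y' = bra L (x - x') y + bra L x' (y - y').
  by rewrite linearBl linearBr /= addrA subrK.
have [_ [_ Ibra]] := idealI; apply: subspaceD (ideal_subspace idealI) _ _.
  exact: (Ibra y _ (ideal_sub_repr x)).2.
exact: (Ibra x' _ (ideal_sub_repr y)).1.
Qed.

Lemma quot_scaleA a b v : quot_scale a (quot_scale b v) = quot_scale (a * b) v.
Proof. by elim/quotW: v => v; rewrite -!pi_scale scalerA. Qed.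

Lemma quot_scale1 : left_id 1 quot_scale.
Proof. by elim/quotW=> v; rewrite -pi_scale scale1r. Qed.

Lemma quot_scaleDr : right_distributive quot_scale +%R.
Proof.
by move=> a; elim/quotW=> x; elim/quotW=> y; rewrite -raddfD -!pi_scale scalerDr raddfD.
Qed.

Lemma quot_scaleDl v : {morph quot_scale^~ v : a b / a + b}.
Proof. by elim/quotW: v => v a b; rewrite -!pi_scale scalerDl raddfD. Qed.

HB.instance Definition _ := GRing.Zmodule_isLmodule.Build K Q
  quot_scaleA quot_scale1 quot_scaleDr quot_scaleDl.

HB.instance Definition _ := GRing.isScalable.Build K L Q *:%R \pi_Q pi_scale.

Lemma quot_bra_linl a (x y z : Q) :
  quot_bra (a *: x + y) z = a *: quot_bra x z + quot_bra y z.
Proof.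
elim/quotW: x => x; elim/quotW: y => y; elim/quotW: z => z.
by rewrite -linearP -!pi_bra bra_linl linearP.
Qed.

Lemma quot_bra_linr a (x y z : Q) :
  quot_bra z (a *: x + y) = a *: quot_bra z x + quot_bra z y.
Proof.
elim/quotW: x => x; elim/quotW: y => y; elim/quotW: z => z.
by rewrite -linearP -!pi_bra bra_linr linearP.
Qed.

Lemma quot_bra_leibniz (x y z : Q) :
  quot_bra x (quot_bra y z) = quot_bra (quot_bra x y) z - quot_bra (quot_bra x z) y.
Proof.
elim/quotW: x => x; elim/quotW: y => y; elim/quotW: z => z.
by rewrite -!pi_bra bra_leibniz raddfB.
Qed.

Definition quotient_leibniz : leibniz K :=
  Leibniz quot_bra_linl quot_bra_linr quot_bra_leibniz.

Lemma pi_hom : @is_hom K L quotient_leibniz \pi_Q.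
Proof. by split=> [a x y | x y]; [rewrite linearP | rewrite pi_bra]. Qed.

Lemma quotient_lift (M : leibniz K) (phi : L -> M) :
  is_hom phi -> (forall v, I v -> phi v = 0) ->
  exists2 phi' : quotient_leibniz -> M, is_hom phi' & forall v, phi' (\pi_Q v) = phi v.
Proof.
move=> homphi phiI.
have phi_repr v : phi (repr (\pi_Q v)) = phi v.
  by apply/eqP; rewrite eq_sym -subr_eq0 -(homB homphi) phiI //; apply: ideal_sub_repr.
exists (phi \o repr); last exact: phi_repr.
split=> [a + + | + +]; elim/quotW=> x; elim/quotW=> y /=.
  by rewrite -linearP !phi_repr (proj1 homphi).
by rewrite -pi_bra !phi_repr (proj2 homphi).
Qed.

Lemma ZLie_piP v :
  ZLie (\pi_Q v : quotient_leibniz) <-> forall m, I (symbra L m v).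
Proof.
split=> [Zv m | Iv].
  by have := Zv (\pi_Q m); rewrite /= -!pi_bra -raddfD => /pi_eq0.
by elim/quotW=> m; rewrite /= -!pi_bra -raddfD; apply/pi_eq0.
Qed.

End LeibnizQuotient.

Lemma hom_comp (K : fieldType) (h g k : leibniz K) (f : h -> g) (f' : g -> k) :
  is_hom f -> is_hom f' -> is_hom (f' \o f).
Proof.
move=> [linf braf] [linf' braf']; split=> [a x y | x y] /=.
  by rewrite linf linf'.
by rewrite braf braf'.
Qed.

Lemma precise_ZLie_ZLie (K : fieldType) (g : leibniz K) (z : g) :
  precise_ZLie z -> ZLie z.
Proof.
have id_ext : lie_central_ext (@idfun g).
  split=> //; split=> [b | y /= -> q]; first by exists b.
  by rewrite linear0l linear0r addr0.
by move=> /(_ g idfun id_ext) [w [Zw <-]].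
Qed.

Lemma free_lift (K : fieldType) (X : Type) (F h g : leibniz K) (iota : X -> F)
    (pi : F -> g) (f : h -> g) :
  is_free iota -> is_hom pi -> is_hom f -> surj f ->
  exists2 psi : F -> h, is_hom psi & forall y, f (psi y) = pi y.
Proof.
move=> freeF hompi homf surjf; have [sec fsec] := choice surjf.
have [psi [hompsi [psi_iota _]]] := freeF h (sec \o pi \o iota).
have [lift [_ [_ lift_uniq]]] := freeF g (pi \o iota).
exists psi => // y; rewrite -[f _]/((f \o psi) y).
rewrite (lift_uniq _ (hom_comp hompsi homf)) ?(lift_uniq _ hompi) // => u /=.
by rewrite psi_iota fsec.
Qed.

Section FreePresentation.
Variables (K : fieldType) (g : leibniz K) (X : Type) (F : leibniz K).
Variables (iota : X -> F) (pi : F -> g).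
Hypotheses (hompi : is_hom pi) (surjpi : surj pi).
Local Notation Fr := (lie_br (fun=> True) (fun y => pi y = 0)).

Lemma precise_ZLie_lift u :
  is_free iota -> (forall a, Fr (symbra F a u)) -> precise_ZLie (pi u).
Proof.
move=> freeF Fru h f [homf [surjf kerf]].
have [psi hompsi fpsi] := free_lift freeF hompi homf surjf.
exists (psi u); split; last exact: fpsi.
have psi_Fr : forall v, Fr v -> psi v = 0.
  apply: span_min (ideal_subspace (ker_ideal hompsi)) _ => _ [m [n [_ [pin ->]]]].
  by rewrite hom_symbra //; apply: kerf; rewrite fpsi.
move=> q; have [a pia] := surjpi (f q).
have Zk : ZLie (q - psi a) by apply: kerf; rewrite (homB homf) fpsi pia subrr.
rewrite -(subrK (psi a) q) linearDl linearDr /= addrACA [s in s + _]addrC Zk add0r.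
by rewrite -hom_symbra // psi_Fr.
Qed.

Let idealFr := lie_br_ideal (ker_ideal hompi).
Local Notation h := (quotient_leibniz idealFr).
Local Notation qpi := (\pi_(quot (ideal_pred idealFr))).

Lemma lie_central_quotient :
  exists2 f : h -> g, lie_central_ext f & forall v, f (qpi v) = pi v.
Proof.
have [f homf fpi] := quotient_lift idealFr hompi (lie_br_sub (ker_ideal hompi)).
exists f => //; split=> //; split=> [b | ].
  by have [a <-] := surjpi b; exists (qpi a).
by elim/quotW=> v; rewrite fpi => piv; apply/ZLie_piP => m; apply: lie_br_mem.
Qed.

Lemma lie_br_gen_ideal_sub z : precise_ZLie z ->
  forall y, lie_br (fun=> True) (fun n => gen_ideal z (pi n)) y -> Fr y.
Proof.
move=> Zz; have [f extf fpi] := lie_central_quotient.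
have [w [+ +]] := Zz _ f extf; elim/quotW: w => u Zu; rewrite fpi => piu.
pose J t := ZLie (qpi t : h).
have idealJ : is_ideal J := preim_ideal (pi_hom idealFr) (ZLie_ideal h).
have gen_J n : gen_ideal z (pi n) -> J n.
  case/(_ _ (image_ideal hompi surjpi idealJ)) => [|t Jt pit].
    by exists u.
  have Jnt : J (n - t).
    by apply/ZLie_piP => m; apply: lie_br_mem; rewrite homB // pit subrr.
  by rewrite -(subrK t n); apply: subspaceD (ideal_subspace idealJ) Jnt Jt.
apply: span_min (span_subspace _) _ => _ [m [n [_ [zn ->]]]].
exact: (ZLie_piP _ _).1 (gen_J n zn) m.
Qed.

End FreePresentation.

Theorem mainTheorem20 (K : fieldType) (two_inv : (2 : K) != 0) (g : leibniz K)
  (X : Type) (F : leibniz K) (iota : X -> F) (pi : F -> g)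
  (Hfree : is_free iota) (Hpi : is_hom pi) (Hsurj : surj pi) :
  (forall z : g, precise_ZLie z -> z = 0) <->
  (forall x : g, ZLie x -> x != 0 -> sigma_ker_nontrivial pi x).
Proof.
split=> [Z0 x Zx /eqP x_neq0 | ker_nontriv z Zz].
- have [u piu] := Hsurj x; subst x.
  apply: contrapT => ker_triv; apply: x_neq0; apply: Z0.
  apply: (precise_ZLie_lift Hpi Hsurj Hfree) => a.
  apply: contrapT => Fr_a; apply: ker_triv.
  exists (symbra F a u); split; first by rewrite hom_symbra //; apply: Zx.
  split; first by apply: span_mem; exists a, u.
  by split=> //; apply: span_mem; exists a, u; do 2!split.
- apply: contrapT => /eqP z_neq0.
  have [y [_ [_ [notFr Fsy]]]] := ker_nontriv z (precise_ZLie_ZLie Zz) z_neq0.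
  exact: notFr (lie_br_gen_ideal_sub Hpi Hsurj Zz Fsy).
Qed.
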